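(* Let $m_1,m_2\ge 1$ be integers with $\gcd(m_1,m_2)=1$, and let $a\ne b$ be complex numbers such that $T_{m_1}(a)=T_{m_1}(b)$ and $T_{m_2}(a)=T_{m_2}(b)$. Then $T_{m_1m_2}'(a)=T_{m_1m_2}'(b)=0$.
   Context: $T_n$ denotes the Chebyshev polynomial of the first kind of degree $n$, defined by $T_n(\cos\phi)=\cos(n\phi)$. *)

From HB Require Import structures.
From mathcomp Require Import all_boot all_order all_algebra.
Set Implicit Arguments. Unset Strict Implicit. Unset Printing Implicit Defensive.
Import Order.TTheory GRing.Theory Num.Theory.
Local Open Scope ring_scope.

(* Chebyshev polynomials of the first kind, via the standard recurrence
   T_0 = 1, T_1 = X, T_(n+2) = 2 X T_(n+1) - T_n
   (equivalent to T_n(cos phi) = cos(n phi)).  cheb_pair n = (T_n, T_(n+1)). *)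
Fixpoint cheb_pair (R : nzRingType) (n : nat) : {poly R} * {poly R} :=
  match n with
  | 0%N => (1, 'X)
  | n'.+1 => let: (p, q) := cheb_pair R n' in (q, 2%:P * 'X * q - p)
  end.

Definition chebT (R : nzRingType) (n : nat) : {poly R} := (cheb_pair R n).1.

(** Write points as Joukowski images x = (u + u^-1)/2 with u <> 0.  Then
    T_n(x) = (u^n + u^-n)/2 and (u - u^-1)/2 * T_n'(x) = n (u^n - u^-n)/2.  If
    a = J(u) and b = J(v), then T_m(a) = T_m(b) says u^m = v^m or (uv)^m = 1.
    Coprimality of m1, m2 rules out the same alternative for both, since then
    u/v (resp. uv) would be a root of unity of two coprime orders, forcing
    a = b.  In the mixed case u^2 and v^2 are (m1 m2)-th roots of unity
    different from 1, so u^N = u^-N for N = m1 m2 while u <> u^-1, and the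
    derivative formula gives T_N'(a) = 0; likewise at b. *)

From HB Require Import structures.
From mathcomp Require Import all_boot all_order all_algebra ring.
Set Implicit Arguments. Unset Strict Implicit. Unset Printing Implicit Defensive.
Import Order.TTheory GRing.Theory Num.Theory.
Local Open Scope ring_scope.

Lemma chebT0 (R : nzRingType) : chebT R 0 = 1. Proof. by []. Qed.

Lemma chebT1 (R : nzRingType) : chebT R 1 = 'X. Proof. by []. Qed.

Lemma chebTSS (R : nzRingType) n :
  chebT R n.+2 = 2%:P * 'X * chebT R n.+1 - chebT R n.
Proof. by rewrite /chebT /=; case: (cheb_pair R n). Qed.

Lemma expr_coprime_eq1 (R : pzSemiRingType) (w : R) m1 m2 :
  (0 < m1)%N -> coprime m1 m2 -> w ^+ m1 = 1 -> w ^+ m2 = 1 -> w = 1.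
Proof.
move=> m1_gt0 co_m12 wm1 wm2.
have [k _] := Bezoutl m2 m1_gt0; rewrite (eqP co_m12) => /dvdnP[j Ej].
have : w ^+ (1 + k * m2) = w ^+ (j * m1) by rewrite Ej.
by rewrite exprD expr1 mulnC exprM wm2 expr1n mulr1 mulnC exprM wm1 expr1n.
Qed.

Section Joukowski.
Variable F : fieldType.
Hypothesis two_neq0 : (2 : F) != 0.

Definition jouk (u : F) := (u + u^-1) / 2.
Definition jouk_odd (u : F) := (u - u^-1) / 2.

Lemma jouk_eq (u v : F) : u != 0 -> v != 0 ->
  jouk u = jouk v -> u = v \/ u * v = 1.
Proof.
move=> u0 v0 Juv.
have : (u - v) * (u * v - 1) = (jouk u - jouk v) * (2 * u * v).
  by rewrite /jouk; field; rewrite two_neq0 u0 v0.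
rewrite Juv subrr mul0r => /eqP; rewrite mulf_eq0 !subr_eq0.
by case/orP=> /eqP; [left | right].
Qed.

Lemma jouk_inv (u : F) : jouk u^-1 = jouk u.
Proof. by rewrite /jouk invrK addrC. Qed.

Lemma horner_chebT_jouk (u : F) n : u != 0 -> (chebT F n).[jouk u] = jouk (u ^+ n).
Proof.
move=> u0; suff: (chebT F n).[jouk u] = jouk (u ^+ n) /\
                 (chebT F n.+1).[jouk u] = jouk (u ^+ n.+1) by case.
elim: n => [|n [IHn IHn1]].
  rewrite chebT0 chebT1 hornerC hornerX /jouk expr0 expr1 invr1.
  by split=> //; field.
split=> //; rewrite chebTSS !hornerE /= IHn1 IHn /jouk !exprS.
by field; rewrite two_neq0 u0 expf_neq0.
Qed.

Lemma horner_chebT_jouk_eq (u v : F) m : u != 0 -> v != 0 ->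
  (chebT F m).[jouk u] = (chebT F m).[jouk v] -> u ^+ m = v ^+ m \/ u ^+ m * v ^+ m = 1.
Proof.
by move=> u0 v0; rewrite !horner_chebT_jouk //; apply: jouk_eq; rewrite expf_neq0.
Qed.

Lemma jouk_odd_mul_deriv_chebT (u : F) n : u != 0 ->
  jouk_odd u * (chebT F n)^`().[jouk u] = n%:R * jouk_odd (u ^+ n).
Proof.
move=> u0; pose P k := jouk_odd u * (chebT F k)^`().[jouk u] = k%:R * jouk_odd (u ^+ k).
suff: P n /\ P n.+1 by case.
elim: n => [|n [IHn IHn1]].
  rewrite /P chebT0 chebT1 derivC derivX !hornerC /jouk_odd expr1.
  by rewrite mulr0 mul0r mulr1 mul1r.
split=> //; rewrite /P chebTSS !derivE mulr1.
rewrite !(hornerD, hornerN, hornerM, hornerC, hornerX).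
have two_jouk : 2 * jouk u = u + u^-1 by rewrite /jouk mulrC divfK.
rewrite two_jouk mulrBr mulrDr mulrA mulrCA (mulrC (u + u^-1)) IHn IHn1.
rewrite horner_chebT_jouk // /jouk /jouk_odd !exprS -!natr1.
by field; rewrite two_neq0 u0 expf_neq0.
Qed.

Lemma jouk_odd_eq0 (u : F) : u != 0 -> (jouk_odd u == 0) = (u ^+ 2 == 1).
Proof.
move=> u0; have -> : jouk_odd u = (u ^+ 2 - 1) / (2 * u).
  by rewrite /jouk_odd; field; rewrite two_neq0 u0.
by rewrite mulf_eq0 invr_eq0 mulf_eq0 (negbTE two_neq0) (negbTE u0) !orbF subr_eq0.
Qed.

Lemma deriv_chebT_jouk_eq0 (u : F) N : u != 0 -> u ^+ 2 != 1 -> u ^+ (2 * N) = 1 ->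
  (chebT F N)^`().[jouk u] = 0.
Proof.
move=> u0 u2_neq1 u2N.
have uN0 : u ^+ N != 0 by rewrite expf_neq0.
have /eqP oddN : jouk_odd (u ^+ N) == 0 by rewrite jouk_odd_eq0 // -exprM mulnC u2N.
have := jouk_odd_mul_deriv_chebT N u0; rewrite oddN mulr0 => /eqP.
by rewrite mulf_eq0 jouk_odd_eq0 // (negbTE u2_neq1) => /eqP.
Qed.

End Joukowski.

Lemma jouk_surj (C : numClosedFieldType) (a : C) : exists2 u : C, u != 0 & a = jouk u.
Proof.
pose u := a + sqrtC (a ^+ 2 - 1).
have u_root : u ^+ 2 - 2 * a * u + 1 = 0.
  have : (u - a) ^+ 2 = a ^+ 2 - 1 by rewrite /u addrAC subrr add0r sqrtCK.
  by move=> /eqP; rewrite -subr_eq0 => /eqP <-; ring.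
have u0 : u != 0.
  by apply: contra_eq_neq u_root => ->; rewrite expr0n mulr0 subr0 add0r oner_neq0.
exists u => //; apply/eqP; rewrite eq_sym -subr_eq0.
have -> : jouk u - a = (u ^+ 2 - 2 * a * u + 1) / (2 * u).
  by rewrite /jouk; field.
by rewrite u_root mul0r.
Qed.

Lemma root_of_unity_ratio_product (F : fieldType) (u v : F) m1 m2 :
  (0 < m1)%N -> coprime m1 m2 -> u != 0 -> v != 0 -> u != v ->
  (u / v) ^+ m1 = 1 -> (u * v) ^+ m2 = 1 ->
  u ^+ 2 != 1 /\ u ^+ (2 * (m1 * m2)) = 1.
Proof.
move=> m1_gt0 co_m12 u0 v0 u_neq_v wm1 zm2.
have u2 : u ^+ 2 = (u / v) * (u * v) by field.
split.
- apply: contra_neq u_neq_v; rewrite u2 => wz.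
  apply: divr1_eq; apply: (expr_coprime_eq1 m1_gt0 co_m12 wm1).
  have -> : u / v = (u * v)^-1 by rewrite -[RHS]mul1r -wz mulfK // mulf_neq0.
  by rewrite exprVn zm2 invr1.
- by rewrite exprM u2 exprMn exprM wm1 mulnC exprM zm2 !expr1n mulr1.
Qed.

Lemma coprime_relations_root_of_unity (F : fieldType) (u v : F) m1 m2 :
  (0 < m1)%N -> (0 < m2)%N -> coprime m1 m2 -> u != 0 -> v != 0 -> u != v -> u * v != 1 ->
  u ^+ m1 = v ^+ m1 \/ u ^+ m1 * v ^+ m1 = 1 ->
  u ^+ m2 = v ^+ m2 \/ u ^+ m2 * v ^+ m2 = 1 ->
  u ^+ 2 != 1 /\ u ^+ (2 * (m1 * m2)) = 1.
Proof.
move=> m1_gt0 m2_gt0 co_m12 u0 v0 u_neq_v uv_neq1.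
have ratio m : u ^+ m = v ^+ m -> (u / v) ^+ m = 1.
  by move=> E; rewrite exprMn exprVn E divff // expf_neq0.
have prod m : u ^+ m * v ^+ m = 1 -> (u * v) ^+ m = 1 by rewrite exprMn.
case=> [/ratio r1 | /prod p1] [/ratio r2 | /prod p2].
- by rewrite (divr1_eq (expr_coprime_eq1 m1_gt0 co_m12 r1 r2)) eqxx in u_neq_v.
- exact: root_of_unity_ratio_product m1_gt0 co_m12 u0 v0 u_neq_v r1 p2.
- rewrite [(m1 * m2)%N]mulnC.
  by apply: root_of_unity_ratio_product m2_gt0 _ u0 v0 u_neq_v r2 p1; rewrite coprime_sym.
- by rewrite (expr_coprime_eq1 m1_gt0 co_m12 p1 p2) eqxx in uv_neq1.
Qed.

Theorem corollary2p1 (C : numClosedFieldType) (m1 m2 : nat) (a b : C) :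
  (1 <= m1)%N -> (1 <= m2)%N -> coprime m1 m2 ->
  a != b ->
  (chebT C m1).[a] = (chebT C m1).[b] ->
  (chebT C m2).[a] = (chebT C m2).[b] ->
  (chebT C (m1 * m2))^`().[a] = 0 /\ (chebT C (m1 * m2))^`().[b] = 0.
Proof.
move=> m1_gt0 m2_gt0 co_m12 a_neq_b Tm1 Tm2.
have two_neq0 : (2 : C) != 0 by rewrite pnatr_eq0.
have [u u0 Ea] := jouk_surj a; have [v v0 Eb] := jouk_surj b; subst a b.
have u_neq_v : u != v by apply: contraNneq a_neq_b => ->.
have uv_neq1 : u * v != 1.
  by apply: contraNneq a_neq_b => /mulr1_eq <-; rewrite jouk_inv.
have [u2 uN] := coprime_relations_root_of_unity m1_gt0 m2_gt0 co_m12 u0 v0 u_neq_v uv_neq1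
  (horner_chebT_jouk_eq two_neq0 u0 v0 Tm1) (horner_chebT_jouk_eq two_neq0 u0 v0 Tm2).
have v_neq_u : v != u by rewrite eq_sym.
have vu_neq1 : v * u != 1 by rewrite mulrC.
have [v2 vN] := coprime_relations_root_of_unity m1_gt0 m2_gt0 co_m12 v0 u0 v_neq_u vu_neq1
  (horner_chebT_jouk_eq two_neq0 v0 u0 (esym Tm1)) (horner_chebT_jouk_eq two_neq0 v0 u0 (esym Tm2)).
by split; apply: deriv_chebT_jouk_eq0.
Qed.
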